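(* Let $\mathbb{F}$ be a field, let $P(\lambda)\in\mathbb{F}[\lambda]^{m\times n}$ have normal rank $r>0$, and let $P(\lambda)=L(\lambda)E(\lambda)R(\lambda)$ with $L\in\mathbb{F}[\lambda]^{m\times r}$, $E\in\mathbb{F}[\lambda]^{r\times r}$, $R\in\mathbb{F}[\lambda]^{r\times n}$. Let $\rho_{max}$ be the largest minimal index of $\mathcal{R}ow(P)$ and $c_{max}$ the largest minimal index of $\mathcal{C}ol(P)$. Then $$\deg(L)+\deg(E)+\deg(R)\ge\deg(L)+\deg(R)\ge\rho_{max}+c_{max}.$$ Consequently, if $\rho_{max}+c_{max}>\deg(P)$, then no such factorization $P=LER$ (nor any factorization $P=LR$ with $L\in\mathbb{F}[\lambda]^{m\times r}$, $R\in\mathbb{F}[\lambda]^{r\times n}$) has the sum of the degrees of its factors equal to $\deg(P)$.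
   Context: Normal rank: rank over $\mathbb{F}(\lambda)$. Degree of a polynomial matrix: maximum degree of its entries. $\mathcal{R}ow(P)=\{wP:w\in\mathbb{F}(\lambda)^{1\times m}\}$, $\mathcal{C}ol(P)=\{Pv:v\in\mathbb{F}(\lambda)^{n\times1}\}$. Minimal indices of a rational subspace: the degrees of the vectors of a minimal basis, i.e. a basis of polynomial vectors whose sum of degrees is minimal among all polynomial bases. *)

From HB Require Import structures.
From mathcomp Require Import all_boot all_order all_algebra.
Set Implicit Arguments. Unset Strict Implicit. Unset Printing Implicit Defensive.
Import Order.TTheory GRing.Theory Num.Theory.
Local Open Scope ring_scope.

Notation ratF F := {fraction {poly F}}.

Definition ratmx (F : fieldType) (m n : nat) (P : 'M[{poly F}]_(m, n))
  : 'M[ratF F]_(m, n) := map_mx (@FracField.tofrac _) P.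

Definition nrank (F : fieldType) (m n : nat) (P : 'M[{poly F}]_(m, n)) : nat :=
  \rank (ratmx P).

(* Degree of a polynomial matrix: maximum of the degrees of its entries
   (a zero entry contributes 0; only used for nonzero matrices). *)
Definition mxdeg (F : fieldType) (m n : nat) (P : 'M[{poly F}]_(m, n)) : nat :=
  \max_(i < m) \max_(j < n) (size (P i j)).-1.

Definition poly_row_basis (F : fieldType) (k n d : nat)
  (S : 'M[ratF F]_(k, n)) (B : 'M[{poly F}]_(d, n)) : bool :=
  row_free (ratmx B) && (ratmx B == S)%MS.

Definition min_row_basis (F : fieldType) (k n d : nat)
  (S : 'M[ratF F]_(k, n)) (B : 'M[{poly F}]_(d, n)) : Prop :=
  poly_row_basis S B /\
  forall (d' : nat) (B' : 'M[{poly F}]_(d', n)), poly_row_basis S B' ->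
    (\sum_(i < d) mxdeg (row i B) <= \sum_(i < d') mxdeg (row i B'))%N.

Definition min_basis_Row (F : fieldType) (m n d : nat)
  (P : 'M[{poly F}]_(m, n)) (B : 'M[{poly F}]_(d, n)) : Prop :=
  min_row_basis (ratmx P) B.

(* Minimal basis of Col(P) (basis vectors = columns of C); Col(P) is
   identified with the row space of P^T. *)
Definition min_basis_Col (F : fieldType) (m n d : nat)
  (P : 'M[{poly F}]_(m, n)) (C : 'M[{poly F}]_(m, d)) : Prop :=
  min_row_basis (ratmx P^T) C^T.

From HB Require Import structures.
From mathcomp Require Import all_boot all_order all_algebra.
From mathcomp Require Import zify.
Set Implicit Arguments. Unset Strict Implicit. Unset Printing Implicit Defensive.
Import Order.TTheory GRing.Theory Num.Theory.
Local Open Scope ring_scope.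

(* If P = L R with R having r = nrank P rows, the rows of R form a polynomial
   basis of Row(P) and, dually, the columns of L one of Col(P).  A minimal
   basis has no vector of degree larger than the degree of another polynomial
   basis: such a vector could be exchanged (Steinitz) for a suitable vector of
   the other basis, lowering the degree sum.  Hence rho_max <= deg R and
   c_max <= deg L; for P = L E R apply this to (L E) R and to L (E R). *)

Definition set_row (T : Type) m n (i : 'I_m) (v : 'rV[T]_n) (A : 'M_(m, n)) :=
  \matrix_j (if j == i then v else row j A).

Lemma row_set_row (T : Type) m n (i j : 'I_m) (v : 'rV[T]_n) (A : 'M_(m, n)) :
  row j (set_row i v A) = if j == i then v else row j A.
Proof. exact: rowK. Qed.

Lemma set_row_id (T : Type) m n (i : 'I_m) (A : 'M[T]_(m, n)) :
  set_row i (row i A) A = A.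
Proof. by apply/row_matrixP => j; rewrite row_set_row; case: eqP => // ->. Qed.

Lemma map_set_row (T U : Type) (f : T -> U) m n (i : 'I_m) v (A : 'M_(m, n)) :
  map_mx f (set_row i v A) = set_row i (map_mx f v) (map_mx f A).
Proof.
apply/row_matrixP => j; rewrite -map_row !row_set_row.
by case: (j == i); rewrite ?map_row.
Qed.

Section RowExchange.

Variables (K : fieldType) (d n : nat).
Implicit Types (A : 'M[K]_(d, n)) (v : 'rV[K]_n).

Lemma set_row_eqmx A i v : (set_row i v A :=: row' i A + v)%MS.
Proof.
apply/eqmxP/andP; split.
  apply/row_subP => j; rewrite row_set_row.
  case: eqP => [_ | /eqP ji]; first exact: addsmxSr.
  have [k jE] : exists k, j = lift i k.
    by case: (unliftP i j) => [k -> | jEi]; [exists k | rewrite jEi eqxx in ji].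
  by rewrite jE -row_rowsub; apply: submx_trans (row_sub _ _) (addsmxSl _ _).
rewrite addsmx_sub; apply/andP; split.
  apply/row_subP => k; rewrite row_rowsub.
  have := row_sub (lift i k) (set_row i v A).
  by rewrite row_set_row eq_sym (negbTE (neq_lift i k)).
by have := row_sub i (set_row i v A); rewrite row_set_row eqxx.
Qed.

Lemma row_free_set_row A i v :
  row_free A -> ~~ (v <= row' i A)%MS -> row_free (set_row i v A).
Proof.
move=> freeA vNsub; rewrite /row_free eqn_leq rank_leq_row /= set_row_eqmx.
have rankA : \rank A = d by apply/eqP.
have rank_row'_lt : (\rank (row' i A) < \rank (row' i A + v))%N.
  apply: rank_ltmx; rewrite ltmxE addsmxSl /=.
  by apply: contra vNsub => /(submx_trans (addsmxSr _ _)).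
have rank_row'_ge : (d <= \rank (row' i A) + 1)%N.
  rewrite -{1}rankA.
  have := set_row_eqmx A i (row i A); rewrite set_row_id => ->.
  apply: leq_trans (mxrank_adds_leqif _ _).1 _.
  by rewrite leq_add2l rank_leq_row.
lia.
Qed.

Lemma row_free_exchange d' A (A' : 'M_(d', n)) i :
  row_free A -> (A' :=: A)%MS ->
  exists k, row_free (set_row i (row k A') A) /\
            (set_row i (row k A') A :=: A)%MS.
Proof.
move=> freeA A'A.
have [k rowkN] : exists k, ~~ (row k A' <= row' i A)%MS.
  apply/existsP; apply: contraTT freeA => /existsPn A'sub.
  apply/row_freePn; exists i; apply: submx_trans (row_sub i A) _; rewrite -A'A.
  by apply/row_subP => k; apply/negPn/A'sub.
have freeA0 := row_free_set_row freeA rowkN.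
exists k; split=> //; apply/eqmxP; rewrite -(mxrank_leqif_eq _).2.
  by rewrite (eqP freeA) (eqP freeA0).
apply/row_subP => j; rewrite row_set_row; case: (j == i); last exact: row_sub.
by rewrite -A'A row_sub.
Qed.

End RowExchange.

Lemma mxdeg_row (F : fieldType) m n (A : 'M[{poly F}]_(m, n)) i :
  mxdeg (row i A) = \max_(j < n) (size (A i j)).-1.
Proof. by rewrite /mxdeg big_ord1; apply: eq_bigr => j _; rewrite mxE. Qed.

Lemma mxdeg_row_le (F : fieldType) m n (A : 'M[{poly F}]_(m, n)) i :
  (mxdeg (row i A) <= mxdeg A)%N.
Proof.
by rewrite mxdeg_row; apply: (leq_bigmax (F := fun i => \max_j _)).
Qed.

Lemma mxdeg_rows_le (F : fieldType) m n (A : 'M[{poly F}]_(m, n)) k :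
  (forall i, mxdeg (row i A) <= k)%N -> (mxdeg A <= k)%N.
Proof. by move=> degA; apply/bigmax_leqP => i _; rewrite -mxdeg_row. Qed.

Lemma mxdeg_tr (F : fieldType) m n (A : 'M[{poly F}]_(m, n)) :
  mxdeg A^T = mxdeg A.
Proof.
rewrite /mxdeg exchange_big; apply: eq_bigr => i _; apply: eq_bigr => j _.
by rewrite mxE.
Qed.

Lemma sum_mxdeg_set_row (F : fieldType) m n (A : 'M[{poly F}]_(m, n)) i v :
  (\sum_(j < m) mxdeg (row j (set_row i v A)) + mxdeg (row i A) =
   \sum_(j < m) mxdeg (row j A) + mxdeg v)%N.
Proof.
rewrite (bigD1 i) // [in RHS](bigD1 i) //= row_set_row eqxx.
under eq_bigr => j /negbTE ji do rewrite row_set_row ji.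
lia.
Qed.

Lemma nrank_tr (F : fieldType) m n (P : 'M[{poly F}]_(m, n)) :
  nrank P^T = nrank P.
Proof. by rewrite /nrank /ratmx -map_trmx mxrank_tr. Qed.

Lemma min_row_basis_mxdeg_le (F : fieldType) k n d d' (S : 'M[ratF F]_(k, n))
  (B : 'M[{poly F}]_(d, n)) (B' : 'M[{poly F}]_(d', n)) :
  min_row_basis S B -> poly_row_basis S B' -> (mxdeg B <= mxdeg B')%N.
Proof.
move=> [/andP [freeB /eqmxP BS] minB] /andP [_ /eqmxP B'S].
apply: mxdeg_rows_le => i; rewrite leqNgt; apply/negP => degBi.
have [l [freeB0 B0B]] :=
  row_free_exchange i freeB (eqmx_trans B'S (eqmx_sym BS)).
have basisB0 : poly_row_basis S (set_row i (row l B') B).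
  rewrite /poly_row_basis /ratmx map_set_row map_row.
  by rewrite freeB0; apply/eqmxP; apply: eqmx_trans B0B BS.
have := minB _ _ basisB0.
have := sum_mxdeg_set_row B i (row l B').
have := mxdeg_row_le B' l.
lia.
Qed.

Lemma poly_row_basis_factor (F : fieldType) m n r (P : 'M[{poly F}]_(m, n))
  (L : 'M[{poly F}]_(m, r)) (R : 'M[{poly F}]_(r, n)) :
  nrank P = r -> P = L *m R -> poly_row_basis (ratmx P) R.
Proof.
move=> rankP PLR; rewrite /nrank in rankP.
have PR : (ratmx P <= ratmx R)%MS by rewrite PLR /ratmx map_mxM submxMl.
have rankR : \rank (ratmx R) = r.
  by apply/eqP; rewrite eqn_leq rank_leq_row /= -{1}rankP mxrankS.
rewrite /poly_row_basis /row_free rankR eqxx /= /eqmx PR andbT.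
by rewrite -(mxrank_leqif_sup PR).2 rankR rankP.
Qed.

Lemma min_basis_Row_mxdeg_le (F : fieldType) m n r d (P : 'M[{poly F}]_(m, n))
  (B : 'M_(d, n)) (L : 'M_(m, r)) (R : 'M_(r, n)) :
  nrank P = r -> min_basis_Row P B -> P = L *m R -> (mxdeg B <= mxdeg R)%N.
Proof.
move=> rankP minB PLR.
exact: min_row_basis_mxdeg_le minB (poly_row_basis_factor rankP PLR).
Qed.

Lemma min_basis_Col_mxdeg_le (F : fieldType) m n r d (P : 'M[{poly F}]_(m, n))
  (C : 'M_(m, d)) (L : 'M_(m, r)) (R : 'M_(r, n)) :
  nrank P = r -> min_basis_Col P C -> P = L *m R -> (mxdeg C <= mxdeg L)%N.
Proof.
move=> rankP minC PLR; rewrite -mxdeg_tr -(mxdeg_tr L).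
apply: min_row_basis_mxdeg_le minC (poly_row_basis_factor (L := R^T) _ _).
  by rewrite nrank_tr.
by rewrite PLR trmx_mul.
Qed.

Theorem lemma3p4 (F : fieldType) (m n r : nat) (P : 'M[{poly F}]_(m, n)) :
  nrank P = r -> (0 < r)%N ->
  forall (d1 d2 : nat) (B : 'M[{poly F}]_(d1, n)) (C : 'M[{poly F}]_(m, d2)),
  min_basis_Row P B -> min_basis_Col P C ->
  (forall (L : 'M[{poly F}]_(m, r)) (E : 'M[{poly F}]_r) (R : 'M[{poly F}]_(r, n)),
     P = L *m E *m R ->
     (mxdeg L + mxdeg R <= mxdeg L + mxdeg E + mxdeg R)%N /\
     (mxdeg B + mxdeg C <= mxdeg L + mxdeg R)%N)
  /\
  ((mxdeg P < mxdeg B + mxdeg C)%N ->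
     (forall (L : 'M[{poly F}]_(m, r)) (E : 'M[{poly F}]_r) (R : 'M[{poly F}]_(r, n)),
        P = L *m E *m R -> (mxdeg L + mxdeg E + mxdeg R <> mxdeg P)%N) /\
     (forall (L : 'M[{poly F}]_(m, r)) (R : 'M[{poly F}]_(r, n)),
        P = L *m R -> (mxdeg L + mxdeg R <> mxdeg P)%N)).
Proof.
move=> rankP _ d1 d2 B C minB minC.
have degLER (L : 'M_(m, r)) (E : 'M_r) (R : 'M_(r, n)) :
    P = L *m E *m R -> (mxdeg B + mxdeg C <= mxdeg L + mxdeg R)%N.
  move=> PLER; rewrite addnC leq_add //.
    by apply: min_basis_Col_mxdeg_le rankP minC _; rewrite PLER -mulmxA.
  exact: min_basis_Row_mxdeg_le rankP minB PLER.
have degLR (L : 'M_(m, r)) (R : 'M_(r, n)) :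
    P = L *m R -> (mxdeg B + mxdeg C <= mxdeg L + mxdeg R)%N.
  by move=> PLR; apply: (degLER L 1%:M R); rewrite mulmx1.
split=> [L E R /degLER | ltPBC]; first by split=> //; lia.
by split=> [L E R /degLER | L R /degLR]; lia.
Qed.
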